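(* The following two group presentations are minimal, in the sense that no relator can be removed without changing the group; equivalently, no relator lies in the normal closure, in the free group on the generators, of the remaining relators: (1) $\langle y_2,y_3 \mid [\,c,\ (y_2^ny_3^m)^{-1}c\,(y_2^ny_3^m)\,],\ n,m\in\mathbb{Z},\ (n,m)>(0,0)\rangle$, where $c=[y_2,y_3]$; (2) $\langle x_1,x_2,x_3 \mid x_1^2,\ x_2^2,\ x_3^2,\ [\,v,\ h_{n,m}^{-1}v\,h_{n,m}\,],\ n,m\in\mathbb{Z},\ (n,m)>(0,0)\rangle$, where $v=[x_2x_1,x_1x_3]$ and $h_{n,m}=(x_2x_1)^n(x_1x_3)^m$.
   Context: Commutators are $[a,b]=aba^{-1}b^{-1}$. The order on pairs is lexicographic: $(n,m)>(0,0)$ means $n>0$, or $n=0$ and $m>0$. (These are presentations of the rotation subgroup and of the triangle group of a generic Euclidean triangle, respectively; the first presents the free metabelian group of rank 2.) *)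

(* Free groups on a generator type T are modelled by words
   (lists of letters (generator, inverted?)) up to free equivalence. *)
From mathcomp Require Import all_boot all_order all_algebra.
From Stdlib Require Import Relations.
Set Implicit Arguments. Unset Strict Implicit. Unset Printing Implicit Defensive.
Import Order.TTheory GRing.Theory Num.Theory.

Definition letter (T : Type) := (T * bool)%type. (* true = inverse letter *)
Definition word (T : Type) := seq (letter T).

Definition linv (T : Type) (a : letter T) : letter T := (a.1, ~~ a.2).
Definition winv (T : Type) (w : word T) : word T := rev (map (@linv T) w).
Definition gen (T : Type) (x : T) : word T := [:: (x, false)].

Inductive free_step (T : Type) : word T -> word T -> Prop :=
| FreeStep (u v : word T) (a : letter T) :
    free_step (u ++ [:: a; linv a] ++ v) (u ++ v).

Definition free_eq (T : Type) : relation (word T) :=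
  clos_refl_sym_trans (word T) (@free_step T).

Inductive in_nclosure (T : Type) (S : word T -> Prop) : word T -> Prop :=
| nc_one : in_nclosure S [::]
| nc_conj (r u w : word T) : S r -> in_nclosure S w ->
    in_nclosure S (u ++ r ++ winv u ++ w)
| nc_conjinv (r u w : word T) : S r -> in_nclosure S w ->
    in_nclosure S (u ++ winv r ++ winv u ++ w)
| nc_eq (w w' : word T) : free_eq w w' -> in_nclosure S w ->
    in_nclosure S w'.

Definition minimal_presentation (T I : Type) (r : I -> word T) : Prop :=
  forall i : I, ~ in_nclosure (fun w => exists j, j <> i /\ w = r j) (r i).

Definition wmul (T : Type) (u v : word T) : word T := u ++ v.
Definition wcomm (T : Type) (a b : word T) : word T :=
  a ++ b ++ winv a ++ winv b.
Definition wpow (T : Type) (u : word T) (n : int) : word T :=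
  match n with
  | Posz k => flatten (nseq k u)
  | Negz k => flatten (nseq k.+1 (winv u))
  end.
Definition wconj (T : Type) (c h : word T) : word T := winv h ++ c ++ h.

Definition lexpos (p : int * int) : bool :=
  ((0 < p.1)%R) || ((p.1 == 0) && (0 < p.2)%R).
Definition PosPair := {p : int * int | lexpos p}.

Definition y2 : word 'I_2 := gen ord0.
Definition y3 : word 'I_2 := gen (@Ordinal 2 1 isT).
Definition cY : word 'I_2 := wcomm y2 y3.
Definition rel1 (p : PosPair) : word 'I_2 :=
  let h := wpow y2 (sval p).1 ++ wpow y3 (sval p).2 in
  wcomm cY (wconj cY h).

Definition x1 : word 'I_3 := gen (@Ordinal 3 0 isT).
Definition x2 : word 'I_3 := gen (@Ordinal 3 1 isT).
Definition x3 : word 'I_3 := gen (@Ordinal 3 2 isT).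
Definition vX : word 'I_3 := wcomm (x2 ++ x1) (x1 ++ x3).
Definition hX (n m : int) : word 'I_3 :=
  wpow (x2 ++ x1) n ++ wpow (x1 ++ x3) m.
Definition rel2 (i : 'I_3 + PosPair) : word 'I_3 :=
  match i with
  | inl k => gen k ++ gen k
  | inr p => wcomm vX (wconj vX (hX (sval p).1 (sval p).2))
  end.

From mathcomp Require Import all_boot all_order all_algebra.
From mathcomp Require Import zify ring.
Set Implicit Arguments. Unset Strict Implicit. Unset Printing Implicit Defensive.
Import Order.TTheory GRing.Theory Num.Theory.
Local Open Scope ring_scope.

(* Each relator is shown to survive in a group in which all the other relators
   die.  For the relators [v, h^-1 v h] this group is a central extension by Z
   of Z[Z^2] x| (Z^2 x| C_2), with 2-cocycle the bilinear form
   B(L, M) = sum L(p) M(q) F(q - p) for an odd F : Z^2 -> Z, so that two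
   elements L, M of Z[Z^2] have commutator B(L, M) - B(M, L).  The generators
   go to the translations by e1, e2 (presentation (1)), or to point
   reflections whose products x2 x1 and x1 x3 are these translations
   (presentation (2)).  Then v goes to d_e1 - d_0, its conjugate by h_{n,m} to
   the translate of that by -(n, m), and the relator to
   DF(-n, -m) - DF(n, m), where D is the second difference in the first
   coordinate.  Choosing F with DF = d_w - d_(-w) makes this -2 at
   (n, m) = w and 0 at every other lexicographically positive (n, m).
   The relators x_k^2 are detected by the exponent sum of x_k. *)

Lemma linvK (T : Type) : involutive (@linv T).
Proof. by case=> x b; rewrite /linv /= negbK. Qed.

Lemma winvK (T : Type) : involutive (@winv T).
Proof. by move=> u; rewrite /winv map_rev revK -map_comp (eq_map (@linvK T)) map_id. Qed.

Lemma winv_cons (T : Type) (a : letter T) (u : word T) :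
  winv (a :: u) = winv u ++ [:: linv a].
Proof. by rewrite /winv /= rev_cons -cats1. Qed.

Section WordEvaluation.
Variables (M : Type) (mul : M -> M -> M) (one : M) (eqv : M -> M -> Prop).
Hypotheses (mulA : associative mul) (mul1m : left_id one mul) (mulm1 : right_id one mul).
Hypotheses (eqv_refl : forall x, eqv x x) (eqv_sym : forall x y, eqv x y -> eqv y x)
  (eqv_trans : forall x y z, eqv x y -> eqv y z -> eqv x z).
Hypotheses (eqv_mull : forall x y y', eqv y y' -> eqv (mul x y) (mul x y'))
  (eqv_mulr : forall x x' y, eqv x x' -> eqv (mul x y) (mul x' y)).
Variables (T : Type) (img : letter T -> M).
Hypothesis img_linv : forall a, eqv (mul (img a) (img (linv a))) one.

Definition eval_word (w : word T) : M := foldr (fun a x => mul (img a) x) one w.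

Lemma eval_word_cat u w : eval_word (u ++ w) = mul (eval_word u) (eval_word w).
Proof. by elim: u => [|a u IH] /=; rewrite ?mul1m // IH -mulA. Qed.

Lemma eval_word_winv_r u : eqv (mul (eval_word u) (eval_word (winv u))) one.
Proof.
elim: u => [|a u IH] /=; first by rewrite mul1m.
rewrite winv_cons eval_word_cat /= mulm1 -mulA.
apply: eqv_trans (img_linv a); apply: eqv_mull.
rewrite mulA -[X in eqv _ X]mul1m; exact: eqv_mulr.
Qed.

Lemma eval_word_winv_l u : eqv (mul (eval_word (winv u)) (eval_word u)) one.
Proof. by have := eval_word_winv_r (winv u); rewrite winvK. Qed.

Lemma eval_word_free_eq w w' : free_eq w w' -> eqv (eval_word w) (eval_word w').
Proof.
elim=> [_ _ [u v a]|x|x y _|x y z _ IHxy _]; [|exact: eqv_refl|exact: eqv_sym|].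
- rewrite !eval_word_cat; apply: eqv_mull.
  rewrite /= mulm1 -[X in eqv _ X]mul1m; exact: eqv_mulr.
- exact: eqv_trans.
Qed.

Lemma eval_word_conj_one r u w : eqv (eval_word r) one -> eqv (eval_word w) one ->
  eqv (eval_word (u ++ r ++ winv u ++ w)) one.
Proof.
move=> Hr Hw; rewrite !eval_word_cat.
apply: eqv_trans (eqv_mull _ (eqv_mulr _ Hr)) _; rewrite mul1m mulA.
apply: eqv_trans (eqv_mulr _ (eval_word_winv_r u)) _; rewrite mul1m; exact: Hw.
Qed.

Lemma eval_word_nclosure (S : word T -> Prop) w :
  (forall r, S r -> eqv (eval_word r) one) -> in_nclosure S w -> eqv (eval_word w) one.
Proof.
move=> HS; elim=> {w} [|r u w /HS Hr _ Hw|r u w /HS Hr _ Hw|w w' /eval_word_free_eq Hww' _];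
  [exact: eqv_refl|exact: eval_word_conj_one| |exact: eqv_trans (eqv_sym Hww')].
apply: eval_word_conj_one Hw; apply: eqv_trans (eval_word_winv_r r).
rewrite -[X in eqv X _]mul1m; exact: eqv_mulr (eqv_sym Hr).
Qed.

Lemma relator_notin_nclosure (I : Type) (r : I -> word T) (i : I) :
  (forall j, j <> i -> eqv (eval_word (r j)) one) -> ~ eqv (eval_word (r i)) one ->
  ~ in_nclosure (fun w => exists j, j <> i /\ w = r j) (r i).
Proof.
by move=> Hj Hi /eval_word_nclosure H; apply/Hi/H => _ [j [/Hj ? ->]].
Qed.

End WordEvaluation.

Section FormalSums.
Variable T : Type.

Definition feval (k : T -> int) (L : seq (int * T)) : int := \sum_(x <- L) x.1 * k x.2.

Definition fsum_eq (L M : seq (int * T)) : Prop := forall k, feval k L = feval k M.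

Lemma feval_cat k L M : feval k (L ++ M) = feval k L + feval k M.
Proof. exact: big_cat. Qed.

Lemma eq_feval k k' L : k =1 k' -> feval k L = feval k' L.
Proof. by move=> kk'; apply: eq_bigr => x _; rewrite kk'. Qed.

Lemma fevalD k k' L : feval (fun p => k p + k' p) L = feval k L + feval k' L.
Proof. by rewrite /feval -big_split; apply: eq_bigr => x _; rewrite mulrDr. Qed.

Lemma fevalZ c k L : feval (fun p => c * k p) L = c * feval k L.
Proof. by rewrite /feval mulr_sumr; apply: eq_bigr => x _; rewrite mulrCA. Qed.

Lemma fevalN k L : feval (fun p => - k p) L = - feval k L.
Proof. by rewrite -mulN1r -fevalZ; apply: eq_feval => p; rewrite mulN1r. Qed.

Lemma feval0 L : feval (fun=> 0) L = 0.
Proof. by rewrite /feval big1 // => x _; rewrite mulr0. Qed.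

End FormalSums.

Definition pt := (int * int)%type.
Definition e1 : pt := (1, 0).
Definition e2 : pt := (0, 1).

Definition tmul (g : pt) (s : bool) (h : pt) : pt := if s then g - h else g + h.
Definition act (g : pt) (s : bool) (p : pt) : pt := if s then g - p - e2 else g + p.
(* Reflections also negate coefficients; with F odd this makes [form]
   equivariant up to sign ([form_act]). *)
Definition act_sum (g : pt) (s : bool) (L : seq (int * pt)) : seq (int * pt) :=
  [seq ((-1) ^+ s * x.1, act g s x.2) | x <- L].

Lemma feval_act_sum k g s L :
  feval k (act_sum g s L) = (-1) ^+ s * feval (k \o act g s) L.
Proof. by rewrite /feval big_map mulr_sumr; apply: eq_bigr => x _; rewrite mulrA. Qed.

Lemma act_sum_cat g s L M : act_sum g s (L ++ M) = act_sum g s L ++ act_sum g s M.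
Proof. exact: map_cat. Qed.

Lemma act_sum_comp g s h t L :
  act_sum g s (act_sum h t L) = act_sum (tmul g s h) (s (+) t) L.
Proof.
rewrite /act_sum -map_comp; apply: eq_map => x /=.
by rewrite signr_addb mulrA; congr pair; case: s; case: t; rewrite /act /tmul /=; ring.
Qed.

Lemma act_sum_eq g s L M : fsum_eq L M -> fsum_eq (act_sum g s L) (act_sum g s M).
Proof. by move=> LM k; rewrite !feval_act_sum LM. Qed.

Lemma act_sum0 L : act_sum 0 false L = L.
Proof.
rewrite /act_sum -[RHS]map_id; apply: eq_map => -[c p].
by rewrite /act /= mul1r add0r.
Qed.

Section CentralExtension.
Variable F : pt -> int.
Hypothesis F_odd : forall p, F (- p) = - F p.

Definition form (L M : seq (int * pt)) : int :=
  feval (fun p => feval (fun q => F (q - p)) M) L.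

Lemma form_catl L L' M : form (L ++ L') M = form L M + form L' M.
Proof. exact: feval_cat. Qed.

Lemma form_catr L M M' : form L (M ++ M') = form L M + form L M'.
Proof. by rewrite /form -fevalD; apply: eq_feval => p; apply: feval_cat. Qed.

Lemma form_eql L L' M : fsum_eq L L' -> form L M = form L' M.
Proof. exact. Qed.

Lemma form_eqr L M M' : fsum_eq M M' -> form L M = form L M'.
Proof. by move=> MM'; apply: eq_feval => p. Qed.

Lemma F_act g s p q : F (act g s q - act g s p) = (-1) ^+ s * F (q - p).
Proof.
case: s; rewrite /act /= ?mul1r ?mulN1r //; last by congr F; ring.
by rewrite -F_odd; congr F; ring.
Qed.

Lemma form_act g s L M : form (act_sum g s L) (act_sum g s M) = (-1) ^+ s * form L M.
Proof.
rewrite /form feval_act_sum; congr (_ * _); apply: eq_feval => p /=.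
rewrite feval_act_sum; under eq_feval do rewrite /= F_act.
by rewrite fevalZ mulrA -expr2 sqrr_sign mul1r.
Qed.

(* [Ext L c t s] stands for c times the central generator, times the group-ring
   element L (a formal combination of points, read up to [fsum_eq]), times the
   affine map [act t s]. *)
Record ext := Ext { ext_sum : seq (int * pt); ext_c : int; ext_t : pt; ext_s : bool }.

Definition ext_one : ext := Ext [::] 0 0 false.

Definition ext_mul (x y : ext) : ext :=
  let L := act_sum (ext_t x) (ext_s x) (ext_sum y) in
  Ext (ext_sum x ++ L) (ext_c x + (-1) ^+ ext_s x * ext_c y + form (ext_sum x) L)
      (tmul (ext_t x) (ext_s x) (ext_t y)) (ext_s x (+) ext_s y).

Definition ext_eq (x y : ext) : Prop :=
  [/\ fsum_eq (ext_sum x) (ext_sum y), ext_c x = ext_c y, ext_t x = ext_t y & ext_s x = ext_s y].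

Lemma ext_mulA : associative ext_mul.
Proof.
move=> [Lx cx gx sx] [Ly cy gy sy] [Lz cz gz sz]; rewrite /ext_mul /=; congr Ext.
- by rewrite act_sum_cat act_sum_comp catA.
- rewrite act_sum_cat form_catr form_catl !act_sum_comp -(act_sum_comp gx sx gy sy Lz).
  by rewrite form_act signr_addb; ring.
- by case: sx; case: sy; rewrite /tmul /=; ring.
- by rewrite addbA.
Qed.

Lemma ext_mul1m : left_id ext_one ext_mul.
Proof.
move=> [L c g s]; rewrite /ext_mul /= act_sum0 /form /feval big_nil.
by rewrite expr0 mul1r !add0r addr0.
Qed.

Lemma ext_mulm1 : right_id ext_one ext_mul.
Proof.
move=> [L c g s]; rewrite /ext_mul /= cats0 mulr0 addr0 /form.
rewrite (@eq_feval _ _ (fun=> 0)) => [|p]; last exact: big_nil.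
by rewrite feval0 addr0 addbF; case: s; rewrite /tmul ?subr0 ?addr0.
Qed.

Lemma ext_eq_refl x : ext_eq x x.
Proof. by []. Qed.

Lemma ext_eq_sym x y : ext_eq x y -> ext_eq y x.
Proof. by case=> Lxy cxy gxy sxy; split. Qed.

Lemma ext_eq_trans x y z : ext_eq x y -> ext_eq y z -> ext_eq x z.
Proof.
case=> Lxy cxy gxy sxy [Lyz cyz gyz syz].
by split; [move=> k; rewrite Lxy | rewrite cxy | rewrite gxy | rewrite sxy].
Qed.

Lemma ext_eq_mull x y y' : ext_eq y y' -> ext_eq (ext_mul x y) (ext_mul x y').
Proof.
case=> Lyy' cyy' gyy' syy'.
set a := act_sum (ext_t x) (ext_s x).
have aLyy' : fsum_eq (a (ext_sum y)) (a (ext_sum y')) by exact: act_sum_eq.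
split=> /= [k|||]; [by rewrite !feval_cat aLyy' | by rewrite cyy' (form_eqr _ aLyy')
  | by rewrite gyy' | by rewrite syy'].
Qed.

Lemma ext_eq_mulr x x' y : ext_eq x x' -> ext_eq (ext_mul x y) (ext_mul x' y).
Proof.
case: x x' => L c g s [L' c' g' s'] [/= LL' -> -> ->].
split=> //= [k|]; first by rewrite !feval_cat LL'.
by rewrite (form_eql _ LL').
Qed.

Definition transl (x : ext) (t : pt) : Prop := ext_t x = t /\ ext_s x = false.

Definition central (c : int) : ext := Ext [::] c 0 false.

Lemma ext_eq_central_one x c : ext_eq x (central c) -> ext_eq x ext_one <-> c = 0.
Proof.
case=> Lx cx tx sx; split=> [[_ cx' _ _]|c0]; first by move: cx; rewrite cx' /= => <-.
by subst c; split.
Qed.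

Lemma ext_mul_transl x y t u : transl x t -> transl y u -> transl (ext_mul x y) (t + u).
Proof. by case: x y => L c g s [L' c' g' s'] [/= -> ->] [/= -> ->]. Qed.

Lemma ext_mul_pure x y : transl x 0 ->
  ext_mul x y = Ext (ext_sum x ++ ext_sum y) (ext_c x + ext_c y + form (ext_sum x) (ext_sum y))
                    (ext_t y) (ext_s y).
Proof. by case: x => L c g s [/= -> ->]; rewrite /ext_mul /= act_sum0 mul1r /tmul add0r. Qed.

Lemma ext_linv_transl x' x t : ext_eq (ext_mul x' x) ext_one -> transl x t ->
  let L := act_sum (- t) false (ext_sum x) in
  [/\ transl x' (- t), forall k, feval k (ext_sum x') = - feval k L
    & ext_c x' + ext_c x + form (ext_sum x') L = 0].
Proof.
case: x' x => L' c' g' s' [L c g s] [/= LL' cc' gg' ss'] [/= gt s0]; subst g s.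
have s'0 : s' = false by move: ss'; rewrite addbF.
subst s'; have g't : g' = - t by apply/eqP; rewrite -addr_eq0; apply/eqP; exact: gg'.
subst g'; split=> // [k|]; last by rewrite -cc' mul1r.
by apply/eqP; rewrite -addr_eq0 -feval_cat LL' /feval big_nil.
Qed.

Lemma form_oppl L L' M : (forall k, feval k L' = - feval k L) -> form L' M = - form L M.
Proof. exact. Qed.

Lemma form_oppr L M M' : (forall k, feval k M' = - feval k M) -> form L M' = - form L M.
Proof. by move=> M'M; rewrite /form -fevalN; apply: eq_feval => p. Qed.

Section WordsInExtension.
Variables (T : Type) (img : letter T -> ext).
Hypothesis img_linv : forall a, ext_eq (ext_mul (img a) (img (linv a))) ext_one.

Local Notation ev := (eval_word ext_mul ext_one img).

Lemma ev_cat u w : ev (u ++ w) = ext_mul (ev u) (ev w).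
Proof. exact: (eval_word_cat ext_mulA ext_mul1m img u w). Qed.

Lemma ev_gen x : ev (gen x) = img (x, false).
Proof. exact: ext_mulm1. Qed.

Lemma ev_relator_notin_nclosure (I : Type) (r : I -> word T) (i : I) :
  (forall j, j <> i -> ext_eq (ev (r j)) ext_one) -> ~ ext_eq (ev (r i)) ext_one ->
  ~ in_nclosure (fun w => exists j, j <> i /\ w = r j) (r i).
Proof.
exact: (relator_notin_nclosure ext_mulA ext_mul1m ext_mulm1 ext_eq_refl ext_eq_sym
          ext_eq_trans ext_eq_mull ext_eq_mulr img_linv).
Qed.

Lemma ev_winv_transl u t : transl (ev u) t ->
  let L := act_sum (- t) false (ext_sum (ev u)) in
  [/\ transl (ev (winv u)) (- t), forall k, feval k (ext_sum (ev (winv u))) = - feval k L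
    & ext_c (ev (winv u)) + ext_c (ev u) + form (ext_sum (ev (winv u))) L = 0].
Proof.
apply: ext_linv_transl.
exact: (eval_word_winv_l ext_mulA ext_mul1m ext_mulm1 ext_eq_refl ext_eq_trans
          ext_eq_mull ext_eq_mulr img_linv).
Qed.

Lemma ev_winv_pure u : transl (ev u) 0 ->
  [/\ transl (ev (winv u)) 0, forall k, feval k (ext_sum (ev (winv u))) = - feval k (ext_sum (ev u))
    & ext_c (ev (winv u)) + ext_c (ev u) + form (ext_sum (ev (winv u))) (ext_sum (ev u)) = 0].
Proof. by move/ev_winv_transl; rewrite /= oppr0 act_sum0. Qed.

Lemma ev_wpow u t n : transl (ev u) t -> transl (ev (wpow u n)) (n * t.1, n * t.2).
Proof.
have ev_nseq v s k : transl (ev v) s ->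
    transl (ev (flatten (nseq k v))) (k%:Z * s.1, k%:Z * s.2).
  move=> vs; elim: k => [|k IH] /=; first by rewrite !mul0r.
  rewrite ev_cat; have := ext_mul_transl vs IH.
  by case: s {vs IH} => s1 s2; congr transl; rewrite intS; congr pair => /=; ring.
case: n => k ut /=; first exact: ev_nseq.
have [uit _ _] := ev_winv_transl ut.
have := ev_nseq _ _ k.+1 uit.
by case: t {ut uit} => t1 t2; congr transl; rewrite NegzE; congr pair => /=; ring.
Qed.

Lemma ev_comm_pure u w : transl (ev u) 0 -> transl (ev w) 0 ->
  let Lu := ext_sum (ev u) in let Lw := ext_sum (ev w) in
  ext_eq (ev (wcomm u w)) (central (form Lu Lw - form Lw Lu)).
Proof.
move=> ut wt; have [u't u'sum u'c] := ev_winv_pure ut.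
have [w't w'sum w'c] := ev_winv_pure wt.
rewrite /wcomm !ev_cat (ext_mul_pure _ u't) (ext_mul_pure _ wt) (ext_mul_pure _ ut).
rewrite (form_oppl _ u'sum) (form_oppl _ w'sum) in u'c w'c.
case: w't => w't w's; split=> //= [k|].
  by rewrite !feval_cat u'sum w'sum /feval big_nil; ring.
rewrite !form_catr (form_oppl _ u'sum) !(form_oppr _ u'sum) !(form_oppr _ w'sum).
lia.
Qed.

Lemma ev_conj_pure c h t : transl (ev c) 0 -> transl (ev h) t ->
  transl (ev (wconj c h)) 0 /\
  fsum_eq (ext_sum (ev (wconj c h))) (act_sum (- t) false (ext_sum (ev c))).
Proof.
move=> ct ht; have [h't h'sum _] := ev_winv_transl ht.
rewrite /wconj !ev_cat (ext_mul_pure _ ct); split.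
  by rewrite -[X in transl _ X](addNr t); apply: (ext_mul_transl h't); exact: ht.
move=> k; case: h't => t' s'.
by rewrite /ext_mul /= t' s' act_sum_cat !feval_cat h'sum; ring.
Qed.

Definition comm_sum : seq (int * pt) := [:: (1, e1); (-1, 0)].

Variables (a b : word T).
Hypotheses (a_transl : transl (ev a) e1) (a_sum : fsum_eq (ext_sum (ev a)) [::]).
Hypotheses (b_transl : transl (ev b) e2) (b_sum : fsum_eq (ext_sum (ev b)) [:: (1, 0)]).

Lemma ev_comm_gens : transl (ev (wcomm a b)) 0 /\ fsum_eq (ext_sum (ev (wcomm a b))) comm_sum.
Proof.
have [a't a'sum _] := ev_winv_transl a_transl.
have [b't b'sum _] := ev_winv_transl b_transl.
rewrite /wcomm !ev_cat; split.
  have := ext_mul_transl a_transl (ext_mul_transl b_transl (ext_mul_transl a't b't)).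
  by congr transl; ring.
case: a_transl a't b_transl b't => [ta sa] [ta' sa'] [tb sb] [tb' sb'] k.
rewrite /ext_mul /= ta sa ta' sa' tb sb !act_sum_cat !act_sum_comp !feval_cat !feval_act_sum.
rewrite a_sum b_sum a'sum b'sum !feval_act_sum a_sum b_sum /feval /= !big_cons !big_nil /=.
have -> : e1 + e2 - e1 + (- e2 + 0) = 0 by ring.
by rewrite addr0; ring.
Qed.

Lemma ev_relator n m :
  ext_eq (ev (wcomm (wcomm a b) (wconj (wcomm a b) (wpow a n ++ wpow b m))))
         (central (form comm_sum (act_sum (- (n, m)) false comm_sum)
                   - form (act_sum (- (n, m)) false comm_sum) comm_sum)).
Proof.
have [ct csum] := ev_comm_gens.
have ht : transl (ev (wpow a n ++ wpow b m)) (n, m).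
  rewrite ev_cat; have := ext_mul_transl (ev_wpow n a_transl) (ev_wpow m b_transl).
  by congr transl; congr pair => /=; ring.
have [zt zsum] := ev_conj_pure ct ht.
have zY : fsum_eq (ext_sum (ev (wconj (wcomm a b) (wpow a n ++ wpow b m))))
                  (act_sum (- (n, m)) false comm_sum).
  by move=> k; rewrite zsum (act_sum_eq _ _ csum).
apply: ext_eq_trans (ev_comm_pure ct zt) _; split=> //=.
by rewrite (form_eql _ csum) (form_eqr _ csum) (form_eql _ zY) (form_eqr _ zY).
Qed.

End WordsInExtension.

End CentralExtension.

Definition d2 (F : pt -> int) (p : pt) : int := F p *+ 2 - F (p - e1) - F (p + e1).

Lemma form_comm_sum_skew F p :
  form F comm_sum (act_sum (- p) false comm_sum) - form F (act_sum (- p) false comm_sum) comm_sum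
  = d2 F (- p) - d2 F p.
Proof.
rewrite /form /feval /comm_sum /act_sum /act /= !big_cons !big_nil /=.
have -> : e1 - (- p + e1) = p by ring.
have -> : 0 - (- p + e1) = p - e1 by ring.
have -> : e1 - (- p + 0) = p + e1 by ring.
have -> : 0 - (- p + 0) = p by ring.
by rewrite /d2 !addr0 addrK; ring.
Qed.

Definition relu (x : int) : int := if 0 <= x then x else 0.

Definition bump (w d : pt) : int :=
  (if d.2 == w.2 then - relu (d.1 - w.1) else 0) +
  (if d.2 == - w.2 then relu (- d.1 - w.1) else 0).

Lemma bump_odd w d : bump w (- d) = - bump w d.
Proof.
case: w d => w1 w2 [q1 q2]; rewrite /bump /= eqr_opp eqr_oppLR opprK.
by case: (q2 == w2); case: (q2 == - w2) => /=; ring.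
Qed.

Lemma d2_relu x : relu x *+ 2 - relu (x - 1) - relu (x + 1) = - (x == 0)%:R.
Proof. by rewrite /relu; case: eqP; do 3 case: ifP; lia. Qed.

Lemma d2_bump w p : d2 (bump w) p = (p == w)%:R - (p == - w)%:R.
Proof.
case: w p => w1 w2 [p1 p2]; rewrite /d2.
have -> : (p1, p2) - e1 = (p1 - 1, p2) by congr pair; apply: subr0.
have -> : (p1, p2) + e1 = (p1 + 1, p2) by congr pair; apply: addr0.
rewrite /bump /= -[- (w1, w2)]/(- w1, - w2) !xpair_eqE.
have := d2_relu (p1 - w1); have := d2_relu (- p1 - w1).
rewrite !subr_eq0 eqr_oppLR.
have -> : p1 - 1 - w1 = p1 - w1 - 1 by ring.
have -> : p1 + 1 - w1 = p1 - w1 + 1 by ring.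
have -> : - (p1 - 1) - w1 = - p1 - w1 + 1 by ring.
have -> : - (p1 + 1) - w1 = - p1 - w1 - 1 by ring.
move: (relu _) (relu _) (relu _) (relu _) (relu _) (relu _) => r1 r2 r3 r4 r5 r6.
by case: (p1 == w1); case: (p1 == - w1); case: (p2 == w2); case: (p2 == - w2) => /=; lia.
Qed.

Lemma lexpos_oppN p : lexpos p -> ~~ lexpos (- p).
Proof. by case: p => a b; rewrite /lexpos /=; lia. Qed.

Lemma d2_bump_skew w p : lexpos w -> lexpos p ->
  d2 (bump w) (- p) - d2 (bump w) p = - (p == w)%:R *+ 2.
Proof.
move=> wpos ppos; rewrite !d2_bump eqr_oppLR eqr_opp.
have -> : (p == - w) = false.
  by apply: contraNF (lexpos_oppN ppos) => /eqP ->; rewrite opprK.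
by case: (p == w) => /=; ring.
Qed.

Lemma odd_fun0 (F : pt -> int) : (forall p, F (- p) = - F p) -> F 0 = 0.
Proof.
by move/(_ 0); rewrite oppr0; set x := F 0; lia.
Qed.

Section ExponentSum.
Variables (T : eqType) (x : T).

Definition expsum_img (a : letter T) : int := if a.1 == x then (-1) ^+ a.2 else 0.

Local Notation expsum := (eval_word +%R 0 expsum_img).

Let addr_congr_l (a b b' : int) : b = b' -> a + b = a + b'. Proof. by move->. Qed.
Let addr_congr_r (a a' b : int) : a = a' -> a + b = a' + b. Proof. by move->. Qed.
Let eq_trans_int (a b c : int) : a = b -> b = c -> a = c. Proof. exact: etrans. Qed.

Lemma expsum_img_linv a : expsum_img a + expsum_img (linv a) = 0.
Proof. by case: a => y [] /=; rewrite /expsum_img /=; case: (y == x); rewrite ?addr0 ?addrN ?addNr. Qed.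

Lemma expsum_cat u w : expsum (u ++ w) = expsum u + expsum w.
Proof. exact: (eval_word_cat (@addrA int) (@add0r int)). Qed.

Lemma expsum_winv u : expsum (winv u) = - expsum u.
Proof.
apply/eqP; rewrite -addr_eq0; apply/eqP.
exact: (eval_word_winv_l (@addrA int) (@add0r int) (@addr0 int) (@erefl int) eq_trans_int
  addr_congr_l addr_congr_r expsum_img_linv).
Qed.

Lemma expsum_wcomm u w : expsum (wcomm u w) = 0.
Proof. by rewrite !expsum_cat !expsum_winv; ring. Qed.

Lemma expsum_gen y : expsum (gen y) = (y == x)%:R.
Proof. by rewrite /= /expsum_img /= addr0; case: (y == x). Qed.

Lemma expsum_notin_nclosure (I : Type) (r : I -> word T) (i : I) :
  (forall j, j <> i -> expsum (r j) = 0) -> expsum (r i) <> 0 ->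
  ~ in_nclosure (fun w => exists j, j <> i /\ w = r j) (r i).
Proof.
exact: (relator_notin_nclosure (@addrA int) (@add0r int) (@addr0 int) (@erefl int)
  (fun a b => @esym int a b) eq_trans_int addr_congr_l addr_congr_r expsum_img_linv).
Qed.

End ExponentSum.

Definition y_img (a : letter 'I_2) : ext :=
  let: (i, inv) := a in
  if i == ord0 then Ext [::] 0 (if inv then - e1 else e1) false
  else if inv then Ext [:: (-1, - e2)] 0 (- e2) false else Ext [:: (1, 0)] 0 e2 false.

Lemma y_img_linv F : (forall p, F (- p) = - F p) ->
  forall a, ext_eq (ext_mul F (y_img a) (y_img (linv a))) ext_one.
Proof.
move=> /odd_fun0 F0 [i inv]; rewrite /linv /=; case: (i == ord0); case: inv;
  split; rewrite /= /tmul ?addNr ?addrN //=; try move=> k;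
  by rewrite /form /feval ?big_cons ?big_nil /= ?addr0 ?subrr ?F0; ring.
Qed.

Lemma ev_rel1 w (j : PosPair) : lexpos w ->
  ext_eq (eval_word (ext_mul (bump w)) ext_one y_img (rel1 j))
         (central (- (sval j == w)%:R *+ 2)).
Proof.
case: j => -[n m] jpos wpos.
have y2t : transl (eval_word (ext_mul (bump w)) ext_one y_img y2) e1 by rewrite ev_gen.
have y3t : transl (eval_word (ext_mul (bump w)) ext_one y_img y3) e2 by rewrite ev_gen.
have y2s : fsum_eq (ext_sum (eval_word (ext_mul (bump w)) ext_one y_img y2)) [::].
  by rewrite ev_gen.
have y3s : fsum_eq (ext_sum (eval_word (ext_mul (bump w)) ext_one y_img y3)) [:: (1, 0)].
  by rewrite ev_gen.
have := ev_relator (@bump_odd w) (y_img_linv (@bump_odd w)) y2t y2s y3t y3s n m.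
by rewrite form_comm_sum_skew d2_bump_skew.
Qed.

Lemma pospair_neq (i j : PosPair) : j <> i -> (sval j == sval i) = false.
Proof. by move=> ji; apply/eqP => /val_inj. Qed.

Lemma minimal_presentation_rel1 : minimal_presentation rel1.
Proof.
move=> i; have ipos := svalP i.
apply: (ev_relator_notin_nclosure (@bump_odd (sval i)) (y_img_linv (@bump_odd (sval i)))).
- move=> j /pospair_neq ji; apply/(ext_eq_central_one (ev_rel1 j ipos)).
  by rewrite ji.
- by move/(ext_eq_central_one (ev_rel1 i ipos)); rewrite eqxx.
Qed.

(* Point reflections, chosen so that x2 x1 and x1 x3 map like y2 and y3. *)
Definition x_img (a : letter 'I_3) : ext :=
  match nat_of_ord a.1 with
  | 0%N => Ext [::] 0 0 true
  | 1%N => Ext [::] 0 e1 true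
  | _ => Ext [:: (-1, - e2)] 0 (- e2) true
  end.

Lemma x_img_linv F : (forall p, F (- p) = - F p) ->
  forall a, ext_eq (ext_mul F (x_img a) (x_img (linv a))) ext_one.
Proof.
move=> /odd_fun0 F0 [[[|[|i]] ?] inv]; rewrite /linv /x_img /=;
  split; rewrite /= /tmul ?subrr //=; try move=> k;
  by rewrite /form /feval ?big_cons ?big_nil /= ?sub0r ?subrr ?F0; ring.
Qed.

Lemma ev_rel2_square w k :
  ext_eq (eval_word (ext_mul (bump w)) ext_one x_img (rel2 (inl k))) ext_one.
Proof.
have -> : rel2 (inl k) = gen k ++ gen k by [].
rewrite (ev_cat (@bump_odd w)) !ev_gen.
exact: x_img_linv (@bump_odd w) (k, false).
Qed.

Lemma ev_rel2_comm w (j : PosPair) : lexpos w ->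
  ext_eq (eval_word (ext_mul (bump w)) ext_one x_img (rel2 (inr j)))
         (central (- (sval j == w)%:R *+ 2)).
Proof.
case: j => -[n m] jpos wpos.
have Fodd := @bump_odd w.
have at1 : transl (eval_word (ext_mul (bump w)) ext_one x_img (x2 ++ x1)) e1.
  by rewrite ev_cat // !ev_gen /transl /= /tmul subr0.
have at2 : transl (eval_word (ext_mul (bump w)) ext_one x_img (x1 ++ x3)) e2.
  by rewrite ev_cat // !ev_gen /transl /= /tmul sub0r opprK.
have as1 : fsum_eq (ext_sum (eval_word (ext_mul (bump w)) ext_one x_img (x2 ++ x1))) [::].
  by rewrite ev_cat // !ev_gen.
have as2 : fsum_eq (ext_sum (eval_word (ext_mul (bump w)) ext_one x_img (x1 ++ x3))) [:: (1, 0)].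
  by move=> k; rewrite ev_cat // !ev_gen /= /feval !big_cons !big_nil /=.
have := ev_relator Fodd (x_img_linv Fodd) at1 as1 at2 as2 n m.
by rewrite form_comm_sum_skew d2_bump_skew.
Qed.

Lemma minimal_presentation_rel2 : minimal_presentation rel2.
Proof.
case=> [k|i].
  apply: (expsum_notin_nclosure (x := k)) => [[j|j] jk|]; rewrite /rel2 ?expsum_wcomm //.
  - rewrite expsum_cat !expsum_gen.
    by have /negbTE -> : j != k by apply/eqP => jk'; apply: jk; rewrite jk'.
  - by rewrite expsum_cat !expsum_gen eqxx.
have ipos := svalP i.
apply: (ev_relator_notin_nclosure (@bump_odd (sval i)) (x_img_linv (@bump_odd (sval i)))).
- case=> [k _|j ji]; first exact: ev_rel2_square.
  apply/(ext_eq_central_one (ev_rel2_comm j ipos)).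
  by rewrite pospair_neq // => ij; apply: ji; rewrite ij.
- by move/(ext_eq_central_one (ev_rel2_comm i ipos)); rewrite eqxx.
Qed.

Theorem theorem5p4 : minimal_presentation rel1 /\ minimal_presentation rel2.
Proof. exact: (conj minimal_presentation_rel1 minimal_presentation_rel2). Qed.
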